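(* Let $v$ be a Llull matrix on a finite set $A$ with path scores $v^*$, and let $x,y,z\in A$ be pairwise distinct. If $v^*_{yz}>v^*_{xz}$, then $v^*_{xz}\ge v^*_{xy}$. If $v^*_{xy}>v^*_{xz}$, then $v^*_{xz}\ge v^*_{yz}$.
   Context: A Llull matrix on $A$ is a family of real numbers $v_{xy}\in[0,1]$, indexed by ordered pairs $(x,y)$ of distinct elements of $A$, with $v_{xy}+v_{yx}\le1$. The path scores are $v^*_{xy}=\max\min(v_{x_0x_1},\dots,v_{x_{m-1}x_m})$, the maximum over all paths $x_0x_1\dots x_m$ with $m\ge1$, $x_0=x$, $x_m=y$ and the $x_i$ pairwise distinct. *)

From mathcomp Require Import all_boot all_order all_algebra.
From mathcomp Require Import reals.
Set Implicit Arguments. Unset Strict Implicit. Unset Printing Implicit Defensive.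
Import Order.TTheory GRing.Theory Num.Theory.
Local Open Scope ring_scope.

Definition llull_matrix (R : realType) (A : finType) (v : A -> A -> R) : Prop :=
  forall x y : A, x != y ->
    [/\ 0 <= v x y, v x y <= 1 & v x y + v y x <= 1].

(* min of v over consecutive pairs of the path x :: s (ending at last x s);
   default 1 is never reached for nonempty s since all values are <= 1. *)
Fixpoint path_min (R : realType) (A : finType) (v : A -> A -> R)
    (x : A) (s : seq A) : R :=
  match s with
  | [::] => 1
  | y :: s' => Num.min (v x y) (path_min v y s')
  end.

(* Intermediate vertices t form an
   n-tuple with n < #|A|; uniqueness of x :: t ++ [y] forces distinctness.
   The outer max starts from 0, which is harmless since all scores are >= 0
   and (for x != y) the direct path exists. *)
Definition path_score (R : realType) (A : finType) (v : A -> A -> R)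
    (x y : A) : R :=
  \big[Num.max/0]_(n < #|A|)
    \big[Num.max/0]_(t : n.-tuple A | uniq (x :: rcons t y))
       path_min v x (rcons t y).

From mathcomp Require Import all_boot all_order all_algebra.
From mathcomp Require Import reals boolp.
Import Order.TTheory GRing.Theory Num.Theory.
Local Open Scope ring_scope.

(* The path scores satisfy the ultrametric-type inequality
   [min (v*_xy, v*_yz) <= v*_xz]: concatenating good paths x -> y and y -> z
   and cutting out the loops gives a simple path x -> z whose weakest link is
   no weaker.  Both claims follow at once. *)

Section PathScore.
Variables (R : realType) (A : finType) (v : A -> A -> R).

Lemma path_min_le1 x s : path_min v x s <= 1.
Proof. by elim: s x => [|y s IH] x //=; rewrite ge_min IH orbT. Qed.

Lemma path_min_cat x s1 s2 :
  path_min v x (s1 ++ s2) = Num.min (path_min v x s1) (path_min v (last x s1) s2).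
Proof.
elim: s1 x => [|y s IH] x /=; last by rewrite IH minA.
by apply/esym/min_idPr; apply: path_min_le1.
Qed.

Lemma path_min_le_suffix x s1 y s2 :
  path_min v x (s1 ++ y :: s2) <= path_min v y s2.
Proof. by rewrite path_min_cat /= !ge_min lexx !orbT. Qed.

Lemma path_min_shorten x s : exists t,
  [/\ uniq (x :: t), last x t = last x s & path_min v x s <= path_min v x t].
Proof.
elim: s x => [|y s IH] x; first by exists [::].
have [t [ut lt pt]] := IH y.
have [->|nxy] := eqVneq x y; first by exists t; rewrite /= ge_min pt orbT.
case: (boolP (x \in t)) => [xt|xNt].
  move: ut lt pt; case/splitPr: xt => t1 t2 ut lt pt.
  exists t2; split.
  - by move: ut; rewrite [uniq (y :: _)]cons_uniq cat_uniq => /and4P[].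
  - by rewrite /= -lt last_cat.
  - by rewrite /= ge_min (le_trans pt) ?path_min_le_suffix ?orbT.
exists (y :: t); split=> //=; last exact: le_min2.
by rewrite in_cons negb_or nxy xNt.
Qed.

Lemma path_score_ge0 x z : 0 <= path_score v x z.
Proof. exact: bigmax_ge_id. Qed.

Lemma path_min_le_score {x z t} : x != z -> uniq (x :: t) -> last x t = z ->
  path_min v x t <= path_score v x z.
Proof.
move=> xNz; case/lastP: t => [/= _ xz|t w]; first by rewrite xz eqxx in xNz.
rewrite last_rcons => ut <-.
have size_t : (size t < #|A|)%N.
  have : (size (x :: rcons t w) <= #|A|)%N.
    by rewrite cardE uniq_leq_size // => a; rewrite mem_enum.
  by rewrite /= size_rcons; apply: ltnW.
apply: (bigmax_sup (Ordinal size_t)) => //.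
exact: (bigmax_sup (in_tuple t)).
Qed.

Lemma path_score_gt {x z c} : 0 <= c -> c < path_score v x z ->
  exists t, [/\ uniq (x :: t), last x t = z & c < path_min v x t].
Proof.
move=> c_ge0 /bigmax_gtP[|[n _ /bigmax_gtP[|[t ut lt]]]]; rewrite ?ltNge ?c_ge0 //.
by exists (rcons t z); rewrite last_rcons.
Qed.

Lemma path_score_min_le x y z : x != z ->
  Num.min (path_score v x y) (path_score v y z) <= path_score v x z.
Proof.
move=> xNz; rewrite leNgt lt_min; apply/negP => /andP[lt_xy lt_yz].
have [t1 [_ lt1 pt1]] := path_score_gt (path_score_ge0 x z) lt_xy.
have [t2 [_ lt2 pt2]] := path_score_gt (path_score_ge0 x z) lt_yz.
have [t [ut lt pt]] := path_min_shorten x (t1 ++ t2).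
have := path_min_le_score xNz ut; rewrite lt last_cat lt1 lt2 => /(_ erefl).
apply/negP; rewrite -ltNge (lt_le_trans _ pt) // path_min_cat lt1 lt_min.
by rewrite pt1 pt2.
Qed.

End PathScore.

Theorem lemma2p6 (R : realType) (A : finType) (v : A -> A -> R)
  (hv : llull_matrix v) (x y z : A)
  (hxy : x != y) (hyz : y != z) (hxz : x != z) :
  (path_score v x z < path_score v y z -> path_score v x y <= path_score v x z) /\
  (path_score v x z < path_score v x y -> path_score v y z <= path_score v x z).
Proof.
have := @path_score_min_le R A v x y z hxz.
rewrite ge_min => /orP[le_xy|le_yz]; split=> // lt_xz.
- by have := lt_le_trans lt_xz le_xy; rewrite ltxx.
- by have := lt_le_trans lt_xz le_yz; rewrite ltxx.
Qed.
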